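(* (i) If $p$ is negligible to double factorial, then so is $q(x)=\int_0^xp(y)dy$. (ii) The set of power series negligible to double factorial is closed under addition, differentiation, scalar multiplication and multiplication; hence if $p$ is negligible to double factorial, then every $q\in\mathcal A_D(p)$ is negligible to double factorial. (iii) If $p(x)=\sum p_kx^k$ is negligible to double factorial and $c$ is a constant, then $q(x)=\sum p_kc^kx^k$ is negligible to double factorial. (iv) If $p$ is negligible to double factorial, then so is $|p|$.
   Context: Power series have real coefficients. $p=\sum p_kx^k$ is negligible to double factorial if $\limsup_{k\to\infty}(|p_k|(k-1)!!)^{1/k}=0$, with $(-1)!!=0!!=1$. $|p|(x):=\sum_k|p_k|x^k$. $\mathcal A_D(p)$ is the $\mathbb{R}$-algebra generated by $\{p,p',p'',\dots\}$, i.e. all finite sums $\sum_sc_sf_{s,1}\cdots f_{s,m_s}$ with $c_s\in\mathbb{R}$, $m_s\in\mathbb N$ (empty product $=1$), each $f_{s,i}$ a derivative of $p$ of some order. *)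

From HB Require Import structures.
From mathcomp Require Import all_boot all_order all_algebra.
From mathcomp Require Import all_classical all_reals all_analysis.
Set Implicit Arguments. Unset Strict Implicit. Unset Printing Implicit Defensive.
Import Order.TTheory GRing.Theory Num.Theory.
Local Open Scope ring_scope.

(* A (formal) power series with real coefficients is its coefficient
   sequence p : nat -> R, p k being the coefficient of x^k. *)

Fixpoint dfact (n : nat) : nat :=
  match n with
  | 0 => 1
  | 1 => 1
  | (m.+2) as n' => (n' * dfact m)%N
  end.

(* (k-1)!! with the convention (-1)!! = 1 (k.-1 = 0 for k = 0, and 0!! = 1) *)
Definition dfact_pred (k : nat) : nat := dfact k.-1.

Definition negl_dfact {R : realType} (p : nat -> R) : Prop :=
  limn_esup (fun k : nat =>
    ((`|p k| * (dfact_pred k)%:R) `^ (k%:R)^-1)%:E) = 0%E.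

Definition ps_add {R : realType} (p q : nat -> R) : nat -> R := fun k => p k + q k.
Definition ps_scale {R : realType} (c : R) (p : nat -> R) : nat -> R := fun k => c * p k.
Definition ps_mul {R : realType} (p q : nat -> R) : nat -> R :=
  fun k => \sum_(i < k.+1) p i * q (k - i)%N.
Definition ps_deriv {R : realType} (p : nat -> R) : nat -> R :=
  fun k => k.+1%:R * p k.+1.
Definition ps_derivn {R : realType} (n : nat) (p : nat -> R) : nat -> R :=
  iter n ps_deriv p.
Definition ps_integ {R : realType} (p : nat -> R) : nat -> R :=
  fun k => match k with 0 => 0 | k'.+1 => p k' / k%:R end.
Definition ps_one {R : realType} : nat -> R := fun k => if k == 0%N then 1 else 0.
Definition ps_dilate {R : realType} (c : R) (p : nat -> R) : nat -> R :=
  fun k => p k * c ^+ k.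
Definition ps_abs {R : realType} (p : nat -> R) : nat -> R := fun k => `|p k|.

Inductive AD {R : realType} (p : nat -> R) : (nat -> R) -> Prop :=
  | AD_der n : AD p (ps_derivn n p)
  | AD_one : AD p ps_one
  | AD_add f g : AD p f -> AD p g -> AD p (ps_add f g)
  | AD_scale c f : AD p f -> AD p (ps_scale c f)
  | AD_mul f g : AD p f -> AD p g -> AD p (ps_mul f g).

(* With w_k = |p_k| (k-1)!!, the condition limsup w_k^(1/k) = 0 says exactly
   that for every e > 0 some C gives w_k <= C e^k for all k.  Such sequences
   are closed under sums, nonnegative multiples, shifts, multiplication by k+1
   or by r^k (replace e by e/2 or e/(r+1)) and, when nonnegative, under Cauchy
   products.  The double factorial estimates (k-1)!! <= k!!,
   k!! <= (k+1) (k-1)!! and (i+j-1)!! <= 4^(i+j) (i-1)!! (j-1)!! show that each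
   operation on p turns w into such a combination; for instance
   w(pq)_k <= 4^k sum_i w(p)_i w(q)_(k-i). *)

From HB Require Import structures.
From mathcomp Require Import all_boot all_order all_algebra.
From mathcomp Require Import all_classical all_reals all_analysis.
From mathcomp Require Import zify ring.
Import Order.TTheory GRing.Theory Num.Theory.
Local Open Scope classical_set_scope.
Local Open Scope ring_scope.

Lemma dfactSS n : dfact n.+2 = (n.+2 * dfact n)%N.
Proof. by []. Qed.

Lemma dfact_leSn n : (dfact n <= dfact n.+1)%N.
Proof.
by elim/ltn_ind: n => -[|[|n]] IH //; rewrite !dfactSS leq_mul ?IH.
Qed.

Lemma dfact_pred_le k : (dfact_pred k <= dfact k)%N.
Proof. by case: k => [|k] //; apply: dfact_leSn. Qed.

Lemma dfactS_le n : (dfact n.+1 <= n.+1 * dfact n)%N.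
Proof. by case: n => [|n] //; rewrite dfactSS leq_mul2l dfact_leSn orbT. Qed.

Lemma dfact_le_pred k : (dfact k <= k.+1 * dfact_pred k)%N.
Proof. by case: k => [|k] //; rewrite (leq_trans (dfactS_le k)) ?leq_mul. Qed.

Lemma dfactD_le a b : (dfact (a + b) <= 2 ^ (a + b) * (dfact a * dfact b))%N.
Proof.
have [n] := ubnP (a + b); elim: n a b => // n IH a b abn.
wlog le_ab : a b abn / (a <= b)%N.
  move=> hwlog; case: (leqP a b) => [|/ltnW ba]; first exact: hwlog.
  by rewrite addnC (mulnC (dfact a)); apply: hwlog; rewrite // addnC.
(* Peel the factor b+2 off the larger argument: a + b + 2 <= 4 (b + 2). *)
case: b le_ab abn => [|[|b]] le_ab abn; first by case: a le_ab {abn}.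
  by case: a le_ab {abn} => [|[]].
have /IH : (a + b < n)%N by lia.
rewrite !addnS !dfactSS !expnS; nia.
Qed.

Lemma dfact_predD_le i j :
  (dfact_pred (i + j) <= 4 ^ (i + j) * (dfact_pred i * dfact_pred j))%N.
Proof.
rewrite /dfact_pred; case: i => [|i]; first by rewrite mul1n leq_pmull ?expn_gt0.
case: j => [|j]; first by rewrite addn0 muln1 leq_pmull ?expn_gt0.
rewrite addSn addnS !succnK; set n := (i + j)%N.
have le_pow : (n.+1 * 2 ^ n <= 4 ^ n.+2)%N.
  have lt_n := ltn_expl n.+1 (isT : (1 < 2)%N).
  by rewrite (_ : 4 = 2 * 2)%N // expnMn leq_mul // ?(leq_trans (ltnW lt_n)) // leq_exp2l // ltnW.
apply: leq_trans (dfactS_le n) _; apply: leq_trans (leq_mul (leqnn _) (dfactD_le i j)) _.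
by rewrite mulnA leq_mul2r le_pow orbT.
Qed.

Section ExpNegligible.
Context {R : realType}.
Implicit Types (a b : nat -> R) (e : R).

Definition exp_negligible a :=
  forall e, 0 < e -> exists C, forall k, a k <= C * e ^+ k.

Lemma powR_inv_le (x e : R) k : 0 <= x -> 0 <= e -> (0 < k)%N ->
  (x `^ (k%:R)^-1 <= e) = (x <= e ^+ k).
Proof.
move=> x0 e0 k0; rewrite -(ler_pXn2r k0) ?nnegrE ?powR_ge0 //.
suff -> : (x `^ (k%:R)^-1) ^+ k = x by [].
by rewrite -powR_mulrn ?powR_ge0 // -powRrM mulVf ?powRr1 // pnatr_eq0 -lt0n.
Qed.

Lemma limn_esup_root_eq0P {a} : (forall k, 0 <= a k) ->
  limn_esup (fun k => (a k `^ (k%:R)^-1)%:E) = 0%E <->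
  forall e, 0 < e -> \forall k \near \oo, a k <= e ^+ k.
Proof.
move=> a0; set root := fun k => a k `^ (k%:R)^-1.
have root_ge0 k : 0 <= root k by apply: powR_ge0.
have root_cvg0P : limn_esup (fun k => (root k)%:E) = 0%E <-> root @ \oo --> 0.
  split=> [esup0|root0].
    have /fine_cvgP[] // : (fun k => (root k)%:E) @ \oo --> 0%E.
    by apply: limn_esup_le_cvg => [|k]; rewrite ?esup0 ?lee_fin.
  have /cvg_limn_einf_sup[] // : (fun k => (root k)%:E) @ \oo --> 0%E.
  by apply/fine_cvgP; split; first exact: nearW.
split=> [/root_cvg0P/cvgr0Pnorm_le H | H]; [|apply/root_cvg0P/cvgr0Pnorm_le];
  move=> e e0; apply: filterS2 (nbhs_infty_gt 0) (H e e0) => k k0;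
  by rewrite ger0_norm // /root powR_inv_le // ltW.
Qed.

Lemma exp_negligibleP a : exp_negligible a <->
  forall e, 0 < e -> \forall k \near \oo, a k <= e ^+ k.
Proof.
split=> [Ha e e0 | Ha e e0].
  have e2_gt0 : 0 < e / 2 by rewrite divr_gt0.
  have [C HC] := Ha _ e2_gt0.
  apply: filterS (nbhs_infty_ger C) => k Ck.
  have C2k : C <= 2 ^+ k by rewrite (le_trans Ck) // -natrX ler_nat ltnW // ltn_expl.
  apply: le_trans (HC k) (le_trans (ler_wpM2r (exprn_ge0 _ (ltW e2_gt0)) C2k) _).
  by rewrite -exprMn mulrC divfK ?pnatr_eq0.
have [N _ HN] := Ha e e0.
exists (\big[Num.max/1]_(i < N) (a i / e ^+ i)) => k.
have ek_gt0 : 0 < e ^+ k by rewrite exprn_gt0.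
case: (ltnP k N) => [kN | /HN ake]; last first.
  by rewrite (le_trans ake) // ler_peMl ?bigmax_ge_id ?(ltW ek_gt0).
by rewrite -(@ler_pdivrMr _ (e ^+ k)) // (le_bigmax _ _ (Ordinal kN)).
Qed.

Lemma exp_negligible_le {a b} :
  (forall k, b k <= a k) -> exp_negligible a -> exp_negligible b.
Proof.
by move=> le_ba Ha e /Ha[C HC]; exists C => k; apply: le_trans (le_ba k) (HC k).
Qed.

Lemma exp_negligibleD {a b} :
  exp_negligible a -> exp_negligible b -> exp_negligible (fun k => a k + b k).
Proof.
move=> Ha Hb e e0; have [C1 H1] := Ha e e0; have [C2 H2] := Hb e e0.
by exists (C1 + C2) => k; rewrite mulrDl lerD.
Qed.

Lemma exp_negligibleZ {c a} :
  0 <= c -> exp_negligible a -> exp_negligible (fun k => c * a k).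
Proof.
by move=> c0 Ha e /Ha[C HC]; exists (c * C) => k; rewrite -mulrA ler_wpM2l.
Qed.

Lemma exp_negligible_succ {a} :
  exp_negligible a -> exp_negligible (fun k => a k.+1).
Proof. by move=> Ha e /Ha[C HC]; exists (C * e) => k; rewrite -mulrA -exprS. Qed.

Lemma exp_negligible_shift_le {a b} :
  (forall k, b k.+1 <= a k) -> exp_negligible a -> exp_negligible b.
Proof.
move=> le_ba Ha e e0; have [C HC] := Ha e e0.
exists (Num.max (b 0%N) (C / e)) => -[|k]; first by rewrite expr0 mulr1 le_max lexx.
rewrite (le_trans (le_ba k)) // (le_trans (HC k)) // exprS mulrA.
by rewrite ler_pM2r ?exprn_gt0 // -ler_pdivrMr // le_max lexx orbT.
Qed.

(* A factor k + 1 <= 2 ^ k is absorbed by halving e. *)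
Lemma exp_negligible_poly {a} :
  (forall e, 0 < e -> exists C, forall k, a k <= C * (k.+1%:R * e ^+ k)) ->
  exp_negligible a.
Proof.
move=> Ha e e0; have [C HC] : exists C, forall k, a k <= C * (k.+1%:R * (e / 2) ^+ k).
  by apply: Ha; rewrite divr_gt0.
have le_e k : k.+1%:R * (e / 2) ^+ k <= e ^+ k.
  rewrite expr_div_n mulrCA; apply: ler_piMr; first by rewrite exprn_ge0 ?ltW.
  by rewrite ler_pdivrMr ?exprn_gt0 // mul1r -natrX ler_nat ltn_expl.
exists `|C| => k; apply: le_trans (HC k) _.
apply: le_trans (ler_wpM2r _ (ler_norm C)) (ler_wpM2l _ (le_e k)) => //.
by rewrite mulr_ge0 ?exprn_ge0 ?divr_ge0 ?ltW.
Qed.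

Lemma exp_negligible_natmul {a} :
  exp_negligible a -> exp_negligible (fun k => k.+1%:R * a k).
Proof.
move=> Ha; apply: exp_negligible_poly => e /Ha[C HC].
by exists C => k; rewrite mulrCA ler_wpM2l.
Qed.

Lemma exp_negligible_geomM {r a} :
  0 <= r -> exp_negligible a -> exp_negligible (fun k => r ^+ k * a k).
Proof.
move=> r0 Ha e e0; have r1_gt0 : 0 < r + 1 by rewrite ltr_wpDl.
have [C HC] := Ha (e / (r + 1)) (divr_gt0 e0 r1_gt0).
set d := r * (e / (r + 1)).
have d0 : 0 <= d by rewrite /d mulr_ge0 // divr_ge0 // ltW.
have le_de : d <= e by rewrite /d mulrA ler_pdivrMr // mulrC ler_pM2l // lerDl.
exists `|C| => k; apply: le_trans (ler_wpM2l (exprn_ge0 k r0) (HC k)) _.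
rewrite mulrCA -exprMn -/d.
apply: le_trans (ler_wpM2r _ (ler_norm C)) (ler_wpM2l _ (lerXn2r _ _ _ le_de)).
all: by rewrite ?nnegrE ?exprn_ge0 // ltW.
Qed.

Lemma exp_negligible_conv {a b} :
  (forall k, 0 <= a k) -> (forall k, 0 <= b k) ->
  exp_negligible a -> exp_negligible b ->
  exp_negligible (fun k => \sum_(i < k.+1) a i * b (k - i)%N).
Proof.
move=> a0 b0 Ha Hb; apply: exp_negligible_poly => e e0.
have [C1 H1] := Ha e e0; have [C2 H2] := Hb e e0.
exists (C1 * C2) => k.
have term (i : 'I_k.+1) : a i * b (k - i)%N <= C1 * C2 * e ^+ k.
  apply: le_trans (ler_pM (a0 _) (b0 _) (H1 i) (H2 _)) _.
  by rewrite mulrACA -exprD subnKC // -ltnS.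
apply: le_trans (ler_sum _ (fun i _ => term i)) _.
by rewrite sumr_const card_ord -[_ *+ k.+1]mulr_natl mulrCA.
Qed.

End ExpNegligible.

Section PowerSeries.
Context {R : realType}.
Implicit Types p q : nat -> R.

Definition dfact_weight p k := `|p k| * (dfact_pred k)%:R.

Lemma dfact_weight_ge0 p k : 0 <= dfact_weight p k.
Proof. by rewrite mulr_ge0. Qed.

Lemma negl_dfactE p : negl_dfact p <-> exp_negligible (dfact_weight p).
Proof.
exact: iff_trans (limn_esup_root_eq0P (dfact_weight_ge0 p)) (iff_sym (exp_negligibleP _)).
Qed.

Lemma negl_dfact_abs p : negl_dfact p -> negl_dfact (ps_abs p).
Proof.
move=> /negl_dfactE Hp; apply/negl_dfactE; apply: exp_negligible_le Hp => k.
by rewrite /dfact_weight /ps_abs normr_id.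
Qed.

Lemma negl_dfactD p q : negl_dfact p -> negl_dfact q -> negl_dfact (ps_add p q).
Proof.
move=> /negl_dfactE Hp /negl_dfactE Hq; apply/negl_dfactE.
apply: exp_negligible_le (exp_negligibleD Hp Hq) => k.
by rewrite /dfact_weight -mulrDl ler_wpM2r ?ler_normD.
Qed.

Lemma negl_dfactZ c p : negl_dfact p -> negl_dfact (ps_scale c p).
Proof.
move=> /negl_dfactE Hp; apply/negl_dfactE.
apply: exp_negligible_le (exp_negligibleZ (normr_ge0 c) Hp) => k.
by rewrite /dfact_weight /ps_scale normrM mulrA.
Qed.

Lemma negl_dfact_dilate c p : negl_dfact p -> negl_dfact (ps_dilate c p).
Proof.
move=> /negl_dfactE Hp; apply/negl_dfactE.
apply: exp_negligible_le (exp_negligible_geomM (normr_ge0 c) Hp) => k.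
by rewrite /dfact_weight /ps_dilate normrM normrX mulrAC mulrC.
Qed.

Lemma negl_dfact_deriv p : negl_dfact p -> negl_dfact (ps_deriv p).
Proof.
move=> /negl_dfactE Hp; apply/negl_dfactE.
apply: exp_negligible_le (exp_negligible_natmul (exp_negligible_succ Hp)) => k.
rewrite /dfact_weight /ps_deriv normrM normr_nat -mulrA ler_wpM2l //.
by rewrite ler_wpM2l // ler_nat dfact_pred_le.
Qed.

Lemma negl_dfact_integ p : negl_dfact p -> negl_dfact (ps_integ p).
Proof.
move=> /negl_dfactE Hp; apply/negl_dfactE; apply: exp_negligible_shift_le Hp => k.
rewrite /dfact_weight /= normrM normfV normr_nat -mulrA ler_wpM2l //.
by rewrite ler_pdivrMl // -natrM ler_nat dfact_le_pred.
Qed.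

Lemma dfact_weight_mul_le p q k : dfact_weight (ps_mul p q) k <=
  4 ^+ k * \sum_(i < k.+1) dfact_weight p i * dfact_weight q (k - i)%N.
Proof.
rewrite /dfact_weight /ps_mul mulr_sumr.
apply: le_trans (ler_wpM2r (ler0n _ _) (ler_norm_sum _ _ _)) _.
rewrite mulr_suml; apply: ler_sum => i _.
have le_dfact : (dfact_pred k)%:R <=
    (4 ^ k * (dfact_pred i * dfact_pred (k - i)))%:R :> R.
  by rewrite ler_nat -{1 2}(subnKC (ltnSE (ltn_ord i))) dfact_predD_le.
rewrite normrM; apply: le_trans (ler_wpM2l _ le_dfact) _ => //.
by rewrite natrM natrX !natrM [in X in _ <= X]mulrACA [X in _ <= X]mulrCA.
Qed.

Lemma negl_dfactM p q : negl_dfact p -> negl_dfact q -> negl_dfact (ps_mul p q).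
Proof.
move=> /negl_dfactE Hp /negl_dfactE Hq; apply/negl_dfactE.
apply: exp_negligible_le (dfact_weight_mul_le p q) _.
apply: exp_negligible_geomM => //.
exact: exp_negligible_conv (dfact_weight_ge0 p) (dfact_weight_ge0 q) Hp Hq.
Qed.

Lemma negl_dfact_one : negl_dfact (@ps_one R).
Proof.
apply/negl_dfactE => e e0; exists 1 => -[|k]; rewrite /dfact_weight /ps_one mul1r.
  by rewrite eqxx normr1 mul1r.
by rewrite [_ == _]/= normr0 mul0r exprn_ge0 // ltW.
Qed.

Lemma negl_dfact_derivn n p : negl_dfact p -> negl_dfact (ps_derivn n p).
Proof. by move=> Hp; elim: n => [|n IH] //=; apply: negl_dfact_deriv. Qed.

Lemma negl_dfact_AD p q : negl_dfact p -> AD p q -> negl_dfact q.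
Proof.
move=> Hp; elim=> [n | | f g _ + _ | c f _ | f g _ + _].
- exact: negl_dfact_derivn.
- exact: negl_dfact_one.
- exact: negl_dfactD.
- exact: negl_dfactZ.
- exact: negl_dfactM.
Qed.

End PowerSeries.

Theorem lemma6p3 (R : realType) :
  (* (i) *)
  (forall p : nat -> R, negl_dfact p -> negl_dfact (ps_integ p)) /\
  (* (ii) closure properties *)
  (forall p q : nat -> R, negl_dfact p -> negl_dfact q -> negl_dfact (ps_add p q)) /\
  (forall p : nat -> R, negl_dfact p -> negl_dfact (ps_deriv p)) /\
  (forall (c : R) (p : nat -> R), negl_dfact p -> negl_dfact (ps_scale c p)) /\
  (forall p q : nat -> R, negl_dfact p -> negl_dfact q -> negl_dfact (ps_mul p q)) /\
  (* (ii) consequence for A_D(p) *)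
  (forall p q : nat -> R, negl_dfact p -> AD p q -> negl_dfact q) /\
  (* (iii) *)
  (forall (c : R) (p : nat -> R), negl_dfact p -> negl_dfact (ps_dilate c p)) /\
  (* (iv) *)
  (forall p : nat -> R, negl_dfact p -> negl_dfact (ps_abs p)).
Proof.
split; first exact: negl_dfact_integ.
split; first exact: negl_dfactD.
split; first exact: negl_dfact_deriv.
split; first exact: negl_dfactZ.
split; first exact: negl_dfactM.
split; first exact: negl_dfact_AD.
split; first exact: negl_dfact_dilate.
exact: negl_dfact_abs.
Qed.
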